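(* Let $G$ be a $4$-regular graph, let $f$ be a proper $5$-edge coloring of $G$, and let $P$ be a path in $G$ all of whose edges are colored $1$ or $2$ under $f$. (a) Suppose $P$ has length $4$ with internal vertices $v_1,v_2,v_3$ in order along $P$, and suppose at least one of the following conditions fails: (i) $|f(v_i)\cap f(v_j)\setminus\{1,2\}|=1$ for all $i,j\in\{1,2,3\}$ with $i\neq j$; (ii) if $x_1,x_2$ are the two neighbors of $v_2$ distinct from $v_1$ and $v_3$, then each of the colors $3,4,5$ appears at $x_1$ and at $x_2$ under $f$. Then there is a proper $5$-edge coloring $g$ of $G$, obtainable from $f$ by a sequence of interchanges on bicolored paths with both colors in $\{3,4,5\}$, such that some color in $\{3,4,5\}$ is missing from $g(v_1)\cup g(v_2)$ or from $g(v_2)\cup g(v_3)$. (b) If $P$ has length $5$ with internal vertices $v_1,v_2,v_3,v_4$ in order along $P$, then there is a proper $5$-edge coloring $g$ of $G$, obtainable from $f$ by a sequence of interchanges on bicolored paths with both colors in $\{3,4,5\}$, such that for some $i\in\{1,2,3\}$ some color in $\{3,4,5\}$ is missing from $g(v_i)\cup g(v_{i+1})$.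
   Context: Graphs are finite and simple. A proper $5$-edge coloring is a map $f:E(G)\to\{1,\dots,5\}$ with adjacent edges receiving distinct colors. For a vertex $v$, $f(v)$ denotes the set of colors of edges incident to $v$; a color appears at $v$ if it is in $f(v)$. $G_f(a,b)$ is the subgraph induced by the edges colored $a$ or $b$. An interchange swaps colors $a$ and $b$ on one connected component of $G_f(a,b)$; an interchange on a bicolored path with colors $a,b$ is one where that component is a path. *)

From mathcomp Require Import all_boot.
Set Implicit Arguments. Unset Strict Implicit. Unset Printing Implicit Defensive.

Section Defs.
Variable T : finType.

Definition simple_graph (e : rel T) : Prop := symmetric e /\ irreflexive e.

Definition regular (k : nat) (e : rel T) : Prop :=
  forall v : T, #|[set u | e v u]| = k.

(* An edge colouring is a function on pairs of vertices, only its values on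
   edges matter; colours are the natural numbers 1..5. *)
Definition coloring := T -> T -> nat.

Definition proper5 (e : rel T) (f : coloring) : Prop :=
  [/\ forall x y, e x y -> f x y = f y x,
      forall x y, e x y -> 1 <= f x y <= 5 &
      forall x y z, e x y -> e x z -> y != z -> f x y != f x z].

Definition colors (e : rel T) (f : coloring) (v : T) : seq nat :=
  [seq f v u | u <- enum (e v)].

Definition kr (e : rel T) (f : coloring) (a b : nat) : rel T :=
  fun x y => e x y && ((f x y == a) || (f x y == b)).

Definition swapc (a b c : nat) : nat :=
  if c == a then b else if c == b then a else c.

Definition interchange (e : rel T) (f : coloring) (a b : nat) (x : T) : coloring :=
  fun y z => if kr e f a b y z && connect (kr e f a b) x y
             then swapc a b (f y z) else f y z.

(* The component of G_f(a,b) containing x is a path: its edges are exactly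
   the consecutive pairs of some sequence of distinct vertices. *)
Definition component_is_path (e : rel T) (f : coloring) (a b : nat) (x : T) : Prop :=
  exists (x0 : T) (s : seq T),
    [/\ uniq (x0 :: s), path (kr e f a b) x0 s,
        x \in x0 :: s &
        forall y z, connect (kr e f a b) x y -> kr e f a b y z ->
          exists i, ((nth x0 (x0 :: s) i == y) && (nth x0 (x0 :: s) i.+1 == z)
                     || (nth x0 (x0 :: s) i == z) && (nth x0 (x0 :: s) i.+1 == y))
                    && (i.+1 < size (x0 :: s))].

Definition path_interchange_345 (e : rel T) (f g : coloring) : Prop :=
  exists (a b : nat) (x : T),
    [/\ [&& a \in [:: 3; 4; 5], b \in [:: 3; 4; 5] & a != b],
        (exists y, kr e f a b x y),
        component_is_path e f a b x &
        g = interchange e f a b x].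

Inductive reach345 (e : rel T) : coloring -> coloring -> Prop :=
  | reach_refl f : reach345 e f f
  | reach_step f g h : path_interchange_345 e f g -> reach345 e g h -> reach345 e f h.

Definition missing_pair (e : rel T) (g : coloring) (u v : T) : Prop :=
  exists2 c, c \in [:: 3; 4; 5] & (c \notin colors e g u) && (c \notin colors e g v).

End Defs.

From Pilot Require Import Defs.
From mathcomp Require Import all_boot zify.
Set Implicit Arguments. Unset Strict Implicit. Unset Printing Implicit Defensive.

(* In a 4-regular graph with a proper 5-edge colouring every vertex misses exactly
   one colour, so each inner vertex v_i of a path coloured 1 and 2 misses exactly one
   colour m_i of {3,4,5}. If v sees a and misses b, the (a,b)-Kempe component of v is a
   path starting at v whose only vertices missing a or b are its two ends, and the
   interchange on it makes v miss a. Equal consecutive m_i already give a common missing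
   colour. A pattern a b a is resolved by the interchange at the middle vertex, because
   the two outer vertices cannot both be the far end of its chain. For paths of length 5
   the only remaining pattern a b c a is either resolved at v2 or turned into b c b by
   the interchange at v4. In (a), distinct m_1, m_2, m_3 make condition (i) hold, so some
   neighbour x of v2 misses a colour, and one or two interchanges around v2 x finish. *)

Lemma exists_maximal_path (T : finType) (r : rel T) (v : T) :
  exists s, [/\ uniq (v :: s), path r v s & forall z, r (last v s) z -> z \in v :: s].
Proof.
have grow s z : uniq (v :: s) -> z \notin v :: s ->
    uniq (v :: rcons s z) /\ (size s).+2 <= #|T|.
  move=> su zs; have su' : uniq (v :: rcons s z) by rewrite -rcons_cons rcons_uniq zs su.
  by split=> //; rewrite -[(size s).+2](size_rcons (v :: s) z) -(card_uniqP su') max_card.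
suff: forall n s, #|T| - size s <= n -> uniq (v :: s) -> path r v s ->
    exists s', [/\ uniq (v :: s'), path r v s' & forall z, r (last v s') z -> z \in v :: s'].
  by move=> H; apply: (H #|T| [::]) => //; exact: leq_subr.
elim=> [|n IH] s bound su sp;
  (case: (pickP (fun z => r (last v s) z && (z \notin v :: s))) => [z /andP [rz zs]|none];
   last by exists s; split=> // z rz; apply/negPn/negP => zs; have := none z; rewrite rz zs).
- by have [_] := grow s z su zs; lia.
- have [su' sz] := grow s z su zs; apply: (IH (rcons s z)) => //.
    by rewrite size_rcons; lia.
  by rewrite rcons_path sp rz.
Qed.

Lemma swapcK a b : involutive (swapc a b).
Proof.
move=> c; rewrite /swapc; case: (c =P a) => [->|/eqP na]; first by rewrite eqxx; case: eqP.
case: (c =P b) => [->|/eqP nb]; first by rewrite eqxx.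
by rewrite (negbTE na) (negbTE nb).
Qed.

Lemma swapc_id a b c : c != a -> c != b -> swapc a b c = c.
Proof. by rewrite /swapc => /negbTE -> /negbTE ->. Qed.

Lemma swapc_l a b : swapc a b a = b.
Proof. by rewrite /swapc eqxx. Qed.

Lemma swapc_r a b : swapc a b b = a.
Proof. by rewrite /swapc eqxx; case: eqP. Qed.

Lemma mem_swapc (s : seq nat) a b c : a \in s -> b \in s -> (swapc a b c \in s) = (c \in s).
Proof. by rewrite /swapc => sa sb; case: eqP => [->|_]; [|case: eqP => [->|]]; rewrite ?sa ?sb. Qed.

Lemma mem345_range c : c \in [:: 3; 4; 5] -> 1 <= c <= 5.
Proof. by rewrite !inE => /or3P [] /eqP ->. Qed.

Lemma mem345_other a b c k :
  a \in [:: 3; 4; 5] -> b \in [:: 3; 4; 5] -> c \in [:: 3; 4; 5] -> k \in [:: 3; 4; 5] ->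
  a != b -> b != c -> a != c -> k != a -> k = b \/ k = c.
Proof.
by rewrite !inE => /or3P [] /eqP-> /or3P [] /eqP-> /or3P [] /eqP-> /or3P [] /eqP->; auto.
Qed.

Section Graph.
Variables (T : finType) (e : rel T).
Hypothesis sg : simple_graph e.

Lemma adj_sym : symmetric e. Proof. by case: sg. Qed.
Lemma adj_irr : irreflexive e. Proof. by case: sg. Qed.

Lemma colorsP (f : coloring T) u c :
  reflect (exists2 z, e u z & f u z = c) (c \in colors e f u).
Proof.
apply: (iffP mapP) => [[z]|[z]]; first by rewrite mem_enum => ez ->; exists z.
by move=> ez <-; exists z; rewrite ?mem_enum.
Qed.

Definition missing345 (f : coloring T) (u : T) (m : nat) : Prop :=
  [/\ m \in [:: 3; 4; 5], m \notin colors e f u &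
      forall c, c \in [:: 3; 4; 5] -> c != m -> c \in colors e f u].

Definition recolorable (f : coloring T) (P : coloring T -> Prop) : Prop :=
  exists g, [/\ reach345 e f g, proper5 e g & P g].

Lemma missing_pair_sym f p q : missing_pair e f p q -> missing_pair e f q p.
Proof. by case=> c c345 /andP [cp cq]; exists c; rewrite ?cp ?cq. Qed.

Lemma missing345_pair f p q m : missing345 f p m -> missing345 f q m -> missing_pair e f p q.
Proof. by case=> m345 mp _ [_ mq _]; exists m; rewrite ?mp ?mq. Qed.

Lemma missing345_colors f u m : missing345 f u m ->
  {in [:: 3; 4; 5], forall c, (c \in colors e f u) = (c != m)}.
Proof. by case=> _ mu su c c345; case: (c =P m) => [->|/eqP cm]; [exact: negbTE|exact: su]. Qed.

Lemma count_common345 f x y mx my : missing345 f x mx -> missing345 f y my -> mx != my ->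
  count (fun c => (c \in colors e f x) && (c \in colors e f y)) [:: 3; 4; 5] = 1.
Proof.
move=> Mx My nxy; have [hx _ _] := Mx; have [hy _ _] := My.
rewrite (@eq_in_count _ _ (fun c => (c != mx) && (c != my))) => [|c c345 /=].
  by move: hx hy nxy; rewrite !inE => /or3P [] /eqP-> /or3P [] /eqP->.
by rewrite (missing345_colors Mx c345) (missing345_colors My c345).
Qed.

Lemma recolorable_refl f P : proper5 e f -> P f -> recolorable f P.
Proof. by move=> pf Pf; exists f; split=> //; exact: reach_refl. Qed.

Lemma recolorable_step f g P : path_interchange_345 e f g -> recolorable g P -> recolorable f P.
Proof. by move=> fg [h [gh ph Ph]]; exists h; split=> //; exact: reach_step fg gh. Qed.

Lemma recolorable_mono f (P Q : coloring T -> Prop) :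
  (forall g, P g -> Q g) -> recolorable f P -> recolorable f Q.
Proof. by move=> PQ [g [fg pg Pg]]; exists g; split=> //; exact: PQ. Qed.

Section Coloring.
Variable f : coloring T.
Hypothesis pf : proper5 e f.

Lemma color_sym x y : e x y -> f x y = f y x.
Proof. by case: pf => H _ _; apply: H. Qed.

Lemma color_range x y : e x y -> 1 <= f x y <= 5.
Proof. by case: pf => _ H _; apply: H. Qed.

Lemma color_inj x y z : e x y -> e x z -> f x y = f x z -> y = z.
Proof.
case: pf => _ _ H exy exz fyz; apply/eqP; apply: contraT => nyz.
by have := H _ _ _ exy exz nyz; rewrite fyz eqxx.
Qed.

Lemma colors_range u c : c \in colors e f u -> 1 <= c <= 5.
Proof. by case/colorsP=> z ez <-; exact: color_range. Qed.

Lemma uniq_colors u : uniq (colors e f u).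
Proof.
rewrite map_inj_in_uniq ?enum_uniq // => y z; rewrite !mem_enum; exact: color_inj.
Qed.

Lemma colors12_inner x y z : e x y -> e y z -> x != z ->
  (f x y == 1) || (f x y == 2) -> (f y z == 1) || (f y z == 2) ->
  (1 \in colors e f y) && (2 \in colors e f y).
Proof.
move=> exy eyz nxz; rewrite color_sym // => cx cz; rewrite adj_sym in exy.
have yx : f y x \in colors e f y by apply/colorsP; exists x.
have yz : f y z \in colors e f y by apply/colorsP; exists z.
have : f y x != f y z by apply: contra nxz => /eqP /(color_inj exy eyz) ->.
by case/orP: cx yx => /eqP-> yx; case/orP: cz yz => /eqP-> yz; rewrite ?yx ?yz ?eqxx.
Qed.

Lemma edge_color345 v x y z : e v x -> e v y -> e v z -> y != z -> x != y -> x != z ->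
  (f v y == 1) || (f v y == 2) -> (f v z == 1) || (f v z == 2) -> f v x \in [:: 3; 4; 5].
Proof.
move=> ex ey ez nyz nxy nxz cy cz.
have neq w : e v w -> x != w -> f v x != f v w.
  by move=> ew; apply: contra => /eqP /(color_inj ex ew) ->.
move: (neq y ey nxy) (neq z ez nxz) (color_range ex); rewrite !inE.
have : f v y != f v z by apply: contra nyz => /eqP /(color_inj ey ez) ->.
by case/orP: cy => /eqP->; case/orP: cz => /eqP->; case: (f v x) => [|[|[|[|[|[|]]]]]].
Qed.

Lemma kr_sym a b : symmetric (kr e f a b).
Proof.
move=> x y; rewrite /kr; case: (boolP (e x y)) => exy; first by rewrite adj_sym exy color_sym.
by rewrite adj_sym (negbTE exy).
Qed.

Lemma kr_swap a b : kr e f a b =2 kr e f b a.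
Proof. by move=> x y; rewrite /kr orbC. Qed.

Lemma kr_colors_both a b y z1 z2 : kr e f a b y z1 -> kr e f a b y z2 -> z1 != z2 ->
  (a \in colors e f y) && (b \in colors e f y).
Proof.
move=> /andP [e1 c1] /andP [e2 c2] n12.
have y1 : f y z1 \in colors e f y by apply/colorsP; exists z1.
have y2 : f y z2 \in colors e f y by apply/colorsP; exists z2.
have : f y z1 != f y z2 by apply: contra n12 => /eqP /(color_inj e1 e2) ->.
by case/orP: c1 y1 => /eqP-> y1; case/orP: c2 y2 => /eqP-> y2; rewrite ?y1 ?y2 ?eqxx.
Qed.

Lemma kr_third a b y z1 z2 z : kr e f a b y z1 -> kr e f a b y z2 -> kr e f a b y z ->
  z1 != z2 -> z = z1 \/ z = z2.
Proof.
move=> /andP [e1 c1] /andP [e2 c2] /andP [e0 c0] n12.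
have d : f y z1 != f y z2 by apply: contra n12 => /eqP /(color_inj e1 e2) ->.
have [E|E] : f y z = f y z1 \/ f y z = f y z2.
  by move: d; case/orP: c0 c1 c2 => /eqP-> /orP [] /eqP-> /orP [] /eqP->; rewrite ?eqxx //; auto.
- by left; exact: color_inj E.
- by right; exact: color_inj E.
Qed.

(* The chain is read off a maximal simple (a,b)-path from [v]: [v] has a single
   (a,b)-edge and every vertex at most two, so such a path is chordless and closed. *)
Section KempeChain.
Variables (a b : nat) (v : T).
Hypothesis vb : b \notin colors e f v.
Local Notation K := (kr e f a b).

Lemma kr_start_unique z1 z2 : K v z1 -> K v z2 -> z1 = z2.
Proof.
move=> k1 k2; apply/eqP; apply: contraT => n12.
by have := kr_colors_both k1 k2 n12; rewrite (negbTE vb) andbF.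
Qed.

Variable s : seq T.
Hypotheses (s_uniq : uniq (v :: s)) (s_path : path K v s)
  (s_max : forall z, K (last v s) z -> z \in v :: s).
Local Notation q := (v :: s).

Lemma chain_step i : i.+1 < size q -> K (nth v q i) (nth v q i.+1).
Proof. by move/pathP: s_path; apply. Qed.

Lemma chain_inner i : 0 < i -> i.+1 < size q ->
  [/\ K (nth v q i) (nth v q i.-1), K (nth v q i) (nth v q i.+1)
    & nth v q i.-1 != nth v q i.+1].
Proof.
move=> i0 iq; split; last by rewrite nth_uniq //=; move: iq => /=; lia.
- by rewrite kr_sym; have := @chain_step i.-1; rewrite prednK //; apply; exact: ltnW.
- exact: chain_step.
Qed.

Lemma chain_chordless i j : i < j -> j < size q -> K (nth v q i) (nth v q j) -> j = i.+1.
Proof.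
move=> ij jq Kij; have iq : i.+1 < size q := leq_ltn_trans ij jq.
case: (posnP i) => [i0|i0].
  move: Kij iq; rewrite i0 /= => Kvj q1.
  by move/eqP: (kr_start_unique Kvj (chain_step q1)); rewrite nth_uniq // => /eqP.
have [k1 k2 d] := chain_inner i0 iq.
by case: (kr_third k1 k2 Kij d) => /eqP; rewrite nth_uniq //=; move: ij jq iq => /=; lia.
Qed.

Lemma chain_closed y z : y \in q -> K y z -> z \in q.
Proof.
move=> yq; have [i iq ->] : exists2 i, i < size q & y = nth v q i.
  by exists (index y q); rewrite ?index_mem ?nth_index.
move=> Kiz; case: (ltnP i.+1 (size q)) => [iq1|iqe].
  case: (posnP i) => [i0|i0].
    move: Kiz; rewrite i0 in iq1 * => Kvz.
    by rewrite (kr_start_unique Kvz (chain_step iq1)) mem_nth.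
  have [k1 k2 d] := chain_inner i0 iq1.
  by case: (kr_third k1 k2 Kiz d) => ->; rewrite mem_nth //=; move: iq1 => /=; lia.
by apply: s_max; rewrite (last_nth v); have -> : size s = i by move: iq iqe => /=; lia.
Qed.

Lemma chain_component u : connect K v u -> u \in q.
Proof.
have cl : closed K (mem q).
  move=> x y Kxy; apply/idP/idP => /chain_closed; apply=> //; by rewrite kr_sym.
by move/(closed_connect cl) <-; exact: mem_head.
Qed.

Lemma chain_component_is_path : component_is_path e f a b v.
Proof.
exists v, s; split=> // [|y z vy Kyz]; first exact: mem_head.
have yq := chain_component vy; have zq := chain_closed yq Kyz.
have [i iq Ey] : exists2 i, i < size q & nth v q i = y.
  by exists (index y q); rewrite ?index_mem ?nth_index.
have [j jq Ez] : exists2 j, j < size q & nth v q j = z.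
  by exists (index z q); rewrite ?index_mem ?nth_index.
rewrite -Ey -Ez in Kyz *; case: (ltngtP i j) => [ij|ji|ij].
- by exists i; rewrite -(chain_chordless ij jq Kyz) jq !eqxx.
- by rewrite kr_sym in Kyz; exists j; rewrite -(chain_chordless ji iq Kyz) iq !eqxx orbT.
- by move: Kyz; rewrite ij /kr adj_irr.
Qed.

Lemma chain_end u : connect K v u -> u != v ->
  (a \notin colors e f u) || (b \notin colors e f u) -> u = last v s.
Proof.
move=> vu uv lacks; have [i iq Eu] : exists2 i, i < size q & nth v q i = u.
  by exists (index u q); rewrite ?index_mem ?nth_index ?chain_component.
rewrite -Eu in uv *; case: (posnP i) => [i0|i0]; first by move: uv; rewrite i0 eqxx.
case: (ltnP i.+1 (size q)) => [iq1|iqe].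
  have [k1 k2 d] := chain_inner i0 iq1.
  by move: lacks; rewrite -Eu -negb_and (kr_colors_both k1 k2 d).
by rewrite (last_nth v); congr nth; move: iq iqe => /=; lia.
Qed.

End KempeChain.

Lemma kempe_component_is_path a b v : b \notin colors e f v -> component_is_path e f a b v.
Proof.
move=> vb; have [s [su sp sm]] := exists_maximal_path (kr e f a b) v.
exact (chain_component_is_path vb su sp sm).
Qed.

Lemma kempe_end_unique a b v u1 u2 : b \notin colors e f v ->
  connect (kr e f a b) v u1 -> connect (kr e f a b) v u2 -> u1 != v -> u2 != v ->
  (a \notin colors e f u1) || (b \notin colors e f u1) ->
  (a \notin colors e f u2) || (b \notin colors e f u2) -> u1 = u2.
Proof.
move=> vb vu1 vu2 u1v u2v l1 l2; have [s [su sp sm]] := exists_maximal_path (kr e f a b) v.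
by rewrite (chain_end vb su sp sm vu1 u1v l1) (chain_end vb su sp sm vu2 u2v l2).
Qed.

Section Interchange.
Variables (a b : nat) (x : T).
Local Notation K := (kr e f a b).
Local Notation g := (Defs.interchange e f a b x).

Lemma interchange_out y z : ~~ connect K x y -> g y z = f y z.
Proof. by move=> xy; rewrite /Defs.interchange (negbTE xy) andbF. Qed.

Lemma interchange_in y z : connect K x y -> e y z -> g y z = swapc a b (f y z).
Proof.
move=> xy eyz; rewrite /Defs.interchange xy andbT /kr eyz /=.
by case: ifP => // /negbT; rewrite negb_or => /andP [na nb]; rewrite swapc_id.
Qed.

Lemma interchange_other y z : f y z != a -> f y z != b -> g y z = f y z.
Proof. by move=> na nb; rewrite /Defs.interchange /kr (negbTE na) (negbTE nb) andbF. Qed.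

Lemma colors_interchange_in u c : connect K x u ->
  (c \in colors e g u) = (swapc a b c \in colors e f u).
Proof.
move=> xu; apply/colorsP/colorsP => [[z ez <-]|[z ez fz]]; exists z => //.
  by rewrite interchange_in // swapcK.
by rewrite interchange_in // fz swapcK.
Qed.

Lemma colors_interchange_out u : ~~ connect K x u -> colors e g u = colors e f u.
Proof. by move=> xu; apply: eq_map => z; exact: interchange_out. Qed.

Lemma interchange_proper : 1 <= a <= 5 -> 1 <= b <= 5 -> proper5 e g.
Proof.
move=> ha hb; split=> [y z eyz|y z eyz|y z1 z2 e1 e2 n12].
- rewrite /Defs.interchange kr_sym -(color_sym eyz).
  case: (boolP (K z y)) => //= Kzy; congr (if _ then _ else _).
  by apply/idP/idP => xz; apply: connect_trans xz (connect1 _); rewrite // kr_sym.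
- case: (boolP (connect K x y)) => xy; last by rewrite interchange_out // color_range.
  rewrite interchange_in // /swapc; case: ifP => _ //; case: ifP => _ //; exact: color_range.
- case: (boolP (connect K x y)) => xy; last first.
    by rewrite !interchange_out //; case: pf => _ _; apply.
  rewrite !interchange_in //; apply: contra n12 => /eqP /(can_inj (swapcK a b)).
  by move/(color_inj e1 e2) ->.
Qed.

Lemma missing345_interchange_in u m : a \in [:: 3; 4; 5] -> b \in [:: 3; 4; 5] ->
  connect K x u -> missing345 f u m -> missing345 g u (swapc a b m).
Proof.
move=> ha hb xu [m345 mu su]; split.
- by rewrite mem_swapc.
- by rewrite colors_interchange_in // swapcK.
- move=> c c345 cm; rewrite colors_interchange_in //; apply: su; first by rewrite mem_swapc.
  by apply: contra cm => /eqP <-; rewrite swapcK.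
Qed.

Lemma missing345_interchange_out u m : ~~ connect K x u -> missing345 f u m -> missing345 g u m.
Proof. by move=> xu; rewrite /missing345 colors_interchange_out. Qed.

Lemma missing345_interchange_other u m : a \in [:: 3; 4; 5] -> b \in [:: 3; 4; 5] ->
  m != a -> m != b -> missing345 f u m -> missing345 g u m.
Proof.
move=> ha hb ma mb Mu; case: (boolP (connect K x u)) => xu.
  by rewrite -(swapc_id ma mb); exact: missing345_interchange_in.
exact: missing345_interchange_out.
Qed.

Lemma interchange_345 : a \in [:: 3; 4; 5] -> b \in [:: 3; 4; 5] -> a != b ->
  a \in colors e f x -> b \notin colors e f x -> path_interchange_345 e f g.
Proof.
move=> ha hb nab xa xb; exists a, b, x; split=> //; first by rewrite ha hb nab.
  by case/colorsP: xa => z xz fz; exists z; rewrite /kr xz fz eqxx.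
exact: kempe_component_is_path.
Qed.

End Interchange.
End Coloring.

Lemma recolorable_interchange f a b v P : proper5 e f ->
  a \in [:: 3; 4; 5] -> b \in [:: 3; 4; 5] -> a != b ->
  a \in colors e f v -> b \notin colors e f v ->
  recolorable (Defs.interchange e f a b v) P -> recolorable f P.
Proof. by move=> pf ha hb nab va vb; apply: recolorable_step; exact: interchange_345. Qed.

Lemma interchange_proper345 f a b v : proper5 e f ->
  a \in [:: 3; 4; 5] -> b \in [:: 3; 4; 5] -> proper5 e (Defs.interchange e f a b v).
Proof. by move=> pf ha hb; apply: (interchange_proper pf v); exact: mem345_range. Qed.

Lemma recolor_aba f p q r a b : proper5 e f ->
  missing345 f p a -> missing345 f q b -> missing345 f r a -> a != b ->
  p != q -> q != r -> p != r ->
  recolorable f (fun g => missing_pair e g p q \/ missing_pair e g q r).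
Proof.
move=> pf Mp Mq Mr nab npq nqr npr.
have [ha pa _] := Mp; have [hb qb sq] := Mq; have [_ ra _] := Mr.
apply: (recolorable_interchange pf ha hb nab (sq a ha nab) qb).
apply: recolorable_refl; first exact: interchange_proper345.
have := missing345_interchange_in ha hb (connect0 _ q) Mq; rewrite swapc_r => Mq'.
case: (boolP (connect (kr e f a b) q p)) => qp.
  case: (boolP (connect (kr e f a b) q r)) => qr.
    suff pr : p = r by rewrite pr eqxx in npr.
    apply: (kempe_end_unique pf qb qp qr npq).
    - by rewrite eq_sym.
    - by rewrite pa.
    - by rewrite ra.
  by right; exact: missing345_pair Mq' (missing345_interchange_out qr Mr).
by left; exact: missing345_pair (missing345_interchange_out qp Mp) Mq'.
Qed.

Lemma recolor_edge f p q x k b : proper5 e f ->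
  missing345 f p k -> missing345 f q b -> e q x -> f q x = k -> b \notin colors e f x ->
  p != q -> p != x -> recolorable f (fun g => missing_pair e g p q).
Proof.
move=> pf Mp Mq qx fqx xb npq npx.
have [hk pk _] := Mp; have [hb qb _] := Mq.
have qk : k \in colors e f q by apply/colorsP; exists x.
have nkb : k != b by apply: contraNneq qb => <-.
apply: (recolorable_interchange pf hk hb nkb qk qb).
apply: recolorable_refl; first exact: interchange_proper345.
have Cx : connect (kr e f k b) q x by apply: connect1; rewrite /kr qx fqx eqxx.
have Cp : ~~ connect (kr e f k b) q p.
  apply: contra npx => Cp; apply/eqP; apply: (kempe_end_unique pf qb Cp Cx npq) => //.
  - by apply: contraTneq qx => ->; rewrite adj_irr.
  - by rewrite pk.
  - by rewrite xb orbT.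
have := missing345_interchange_in hk hb (connect0 _ q) Mq; rewrite swapc_r => Mq'.
exact: missing345_pair (missing345_interchange_out Cp Mp) Mq'.
Qed.

Lemma recolor_abca f p1 p2 p3 p4 a b c : proper5 e f ->
  missing345 f p1 a -> missing345 f p2 b -> missing345 f p3 c -> missing345 f p4 a ->
  a != b -> b != c -> a != c -> p1 != p2 -> p2 != p3 -> p3 != p4 -> p2 != p4 -> p1 != p4 ->
  recolorable f (fun g =>
    [\/ missing_pair e g p1 p2, missing_pair e g p2 p3 | missing_pair e g p3 p4]).
Proof.
move=> pf M1 M2 M3 M4 nab nbc nac n12 n23 n34 n24 n14.
have [ha p1a _] := M1; have [hb p2b s2] := M2; have [hc _ _] := M3; have [_ p4a s4] := M4.
have nba : b != a by rewrite eq_sym.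
case: (boolP (connect (kr e f a b) p2 p1)) => C1; last first.
  apply: (recolorable_interchange pf ha hb nab (s2 a ha nab) p2b).
  apply: recolorable_refl; first exact: interchange_proper345.
  have := missing345_interchange_in ha hb (connect0 _ p2) M2; rewrite swapc_r => M2'.
  by apply: Or31; exact: missing345_pair (missing345_interchange_out C1 M1) M2'.
(* [p1] ends the [(a,b)]-chain of [p2], so [p4] is not on it: recolor at [p4] instead. *)
have C4 : ~~ connect (kr e f b a) p4 p2.
  rewrite (eq_connect (kr_swap f b a)) (sym_connect_sym (kr_sym pf a b)).
  apply: contra n14 => C4; apply/eqP; apply: (kempe_end_unique pf p2b C1 C4 n12).
  - by rewrite eq_sym.
  - by rewrite p1a.
  - by rewrite p4a.
apply: (recolorable_interchange pf hb ha nba (s4 b hb nba) p4a).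
have M2' := missing345_interchange_out C4 M2.
have M3' : missing345 (Defs.interchange e f b a p4) p3 c.
  by apply: missing345_interchange_other; rewrite // eq_sym.
have := missing345_interchange_in hb ha (connect0 _ p4) M4; rewrite swapc_r => M4'.
have := recolor_aba (interchange_proper345 p4 pf hb ha) M2' M3' M4' nbc n23 n34 n24.
by apply: recolorable_mono => g [] ?; [apply: Or32 | apply: Or33].
Qed.

Section Regular.
Hypothesis reg : regular 4 e.

Lemma size_colors f u : size (colors e f u) = 4.
Proof. by rewrite size_map -cardE -(reg u) cardsE. Qed.

Lemma missing_color_unique f u c1 c2 : proper5 e f -> 1 <= c1 <= 5 -> 1 <= c2 <= 5 ->
  c1 \notin colors e f u -> c2 \notin colors e f u -> c1 = c2.
Proof.
move=> pf h1 h2 u1 u2; apply/eqP; apply: contraT => n12.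
have U : uniq [:: c1, c2 & colors e f u] by rewrite /= !inE negb_or n12 u1 u2 uniq_colors.
have S : {subset [:: c1, c2 & colors e f u] <= iota 1 5}.
  move=> c; rewrite mem_iota !inE => /or3P [/eqP->|/eqP->|/(colors_range pf)]; lia.
by have := uniq_leq_size U S; rewrite /= size_colors.
Qed.

Lemma missing345_exists f u : proper5 e f ->
  1 \in colors e f u -> 2 \in colors e f u -> exists m, missing345 f u m.
Proof.
move=> pf u1 u2; have : ~~ all (mem (colors e f u)) [:: 3; 4; 5].
  apply/negP => /allP u345; have S : {subset [:: 1; 2; 3; 4; 5] <= colors e f u}.
    by move=> c; rewrite inE => /orP [/eqP->|]; rewrite // inE => /orP [/eqP->|/u345].
  by have := uniq_leq_size (isT : uniq [:: 1; 2; 3; 4; 5]) S; rewrite size_colors.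
case/allPn => m m345 mu; exists m; split=> // c c345; apply: contraNT => cu.
by apply/eqP; apply: (missing_color_unique (u := u) pf) => //; apply: mem345_range.
Qed.

Lemma inner_missing345 f x y z : proper5 e f -> e x y -> e y z -> x != z ->
  (f x y == 1) || (f x y == 2) -> (f y z == 1) || (f y z == 2) -> exists m, missing345 f y m.
Proof.
move=> pf exy eyz nxz cx cz.
by case/andP: (colors12_inner pf exy eyz nxz cx cz); exact: missing345_exists.
Qed.

Lemma recolor_abc_edge f v1 v2 v3 x a b c d : proper5 e f ->
  missing345 f v1 a -> missing345 f v2 b -> missing345 f v3 c -> b != c -> a != c ->
  v1 != v2 -> v2 != v3 -> x != v1 -> x != v3 -> e v2 x -> f v2 x = a ->
  d \in [:: 3; 4; 5] -> d \notin colors e f x ->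
  recolorable f (fun g => missing_pair e g v1 v2 \/ missing_pair e g v2 v3).
Proof.
move=> pf M1 M2 M3 nbc nac n12 n23 nx1 nx3 ex fx d345 xd.
have [ha _ _] := M1; have [hb v2b _] := M2; have [hc v3c _] := M3.
have nab : a != b by apply: contraNneq v2b => <-; apply/colorsP; exists x.
have nx2 : x != v2 by apply: contraTneq ex => ->; rewrite adj_irr.
have n1x : v1 != x by rewrite eq_sym.
have [db|dc] : d = b \/ d = c.
  apply: (mem345_other ha hb hc d345) => //; apply: contraNneq xd => ->.
  by apply/colorsP; exists v2; [rewrite adj_sym | rewrite -(color_sym pf ex)].
- have xb : b \notin colors e f x by rewrite -db.
  by apply: recolorable_mono (recolor_edge pf M1 M2 ex fx xb n12 n1x) => g; left.
subst d.
have xb : b \in colors e f x.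
  apply: contraT => xb.
  have bc := missing_color_unique pf (mem345_range hb) (mem345_range hc) xb xd.
  by rewrite bc eqxx in nbc.
apply: (recolorable_interchange pf hb hc nbc xb xd).
have pg := interchange_proper345 x pf hb hc.
case: (boolP (connect (kr e f b c) x v2)) => C2.
  have C3 : ~~ connect (kr e f b c) x v3.
    apply: contra n23 => C3; apply/eqP; apply: (kempe_end_unique pf xd C2 C3).
    - by rewrite eq_sym.
    - by rewrite eq_sym.
    - by rewrite v2b.
    - by rewrite v3c orbT.
  have := missing345_interchange_in hb hc C2 M2; rewrite swapc_l => M2'.
  apply: recolorable_refl pg _; right.
  exact: missing345_pair M2' (missing345_interchange_out C3 M3).
have M2' := missing345_interchange_out C2 M2.
case: (boolP (connect (kr e f b c) x v3)) => C3.
  have := missing345_interchange_in hb hc C3 M3; rewrite swapc_r => M3'.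
  by apply: recolorable_refl pg _; right; exact: missing345_pair M2' M3'.
have M1' := missing345_interchange_other x hb hc nab nac M1.
have gx : Defs.interchange e f b c x v2 x = a by rewrite interchange_other fx.
have gxb : b \notin colors e (Defs.interchange e f b c x) x.
  by rewrite colors_interchange_in // swapc_l.
by apply: recolorable_mono (recolor_edge pg M1' M2' ex gx gxb n12 n1x) => g; left.
Qed.

Lemma recolor_inner_edge f v1 v2 v3 x m1 m2 m3 d : proper5 e f ->
  missing345 f v1 m1 -> missing345 f v2 m2 -> missing345 f v3 m3 ->
  m1 != m2 -> m2 != m3 -> m1 != m3 -> v1 != v2 -> v2 != v3 -> x != v1 -> x != v3 ->
  e v2 x -> f v2 x \in [:: 3; 4; 5] -> d \in [:: 3; 4; 5] -> d \notin colors e f x ->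
  recolorable f (fun g => missing_pair e g v1 v2 \/ missing_pair e g v2 v3).
Proof.
move=> pf M1 M2 M3 n12 n23 n13 v12 v23 nx1 nx3 ex x345 d345 xd.
have [h1 _ _] := M1; have [h2 v2m _] := M2; have [h3 _ _] := M3.
have k2 : f v2 x != m2 by apply: contraNneq v2m => <-; apply/colorsP; exists x.
have n21 : m2 != m1 by rewrite eq_sym.
case: (mem345_other h2 h1 h3 x345 n21 n13 n23 k2) => k.
  exact: recolor_abc_edge pf M1 M2 M3 n23 n13 v12 v23 nx1 nx3 ex k d345 xd.
have [n32 n31 v32 v21] : [/\ m3 != m2, m3 != m1, v3 != v2 & v2 != v1].
  by split; rewrite eq_sym.
have := recolor_abc_edge pf M3 M2 M1 n21 n31 v32 v21 nx3 nx1 ex k d345 xd.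
by apply: recolorable_mono => g [] /missing_pair_sym; [right | left].
Qed.

Lemma recolor_12path4 f : proper5 e f ->
  forall u0 v1 v2 v3 u4 : T,
     uniq [:: u0; v1; v2; v3; u4] ->
     path e u0 [:: v1; v2; v3; u4] ->
     (forall x y, (x, y) \in [:: (u0, v1); (v1, v2); (v2, v3); (v3, u4)] ->
        (f x y == 1) || (f x y == 2)) ->
     ~ ( (forall x y, x \in [:: v1; v2; v3] -> y \in [:: v1; v2; v3] -> x != y ->
            count (fun c => (c \in colors e f x) && (c \in colors e f y)) [:: 3; 4; 5] = 1)
         /\ (forall x, e v2 x -> x != v1 -> x != v3 ->
               forall c, c \in [:: 3; 4; 5] -> c \in colors e f x) ) ->
     exists g : coloring T,
       [/\ reach345 e f g, proper5 e g &
           missing_pair e g v1 v2 \/ missing_pair e g v2 v3].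
Proof.
move=> pf u0 v1 v2 v3 u4 + /and5P [e01 e12 e23 e34 _] col cond_fails.
rewrite /= !inE !negb_or.
move=> /and5P [/and4P [_ n02 _ _] /and3P [v12 n13 _] /andP [v23 n24] _ _].
have [m1 M1] : exists m, missing345 f v1 m.
  by apply: (inner_missing345 pf e01 e12 n02); apply: col; rewrite !inE eqxx ?orbT.
have [m2 M2] : exists m, missing345 f v2 m.
  by apply: (inner_missing345 pf e12 e23 n13); apply: col; rewrite !inE eqxx ?orbT.
have [m3 M3] : exists m, missing345 f v3 m.
  by apply: (inner_missing345 pf e23 e34 n24); apply: col; rewrite !inE eqxx ?orbT.
case: (m1 =P m2) => [m12|/eqP n12].
  by apply: recolorable_refl => //; left; apply: missing345_pair M1 _; rewrite m12.
case: (m2 =P m3) => [m23|/eqP n23].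
  by apply: recolorable_refl => //; right; apply: missing345_pair M2 _; rewrite m23.
case: (m1 =P m3) => [m13|/eqP n13m].
  by apply: (recolor_aba pf M1 M2 _ n12 v12 v23 n13); rewrite m13.
case: (boolP [exists x,
  [&& e v2 x, x != v1, x != v3 & ~~ all (mem (colors e f x)) [:: 3; 4; 5]]]).
  case/existsP => x /and4P [ex nx1 nx3 /allPn [d d345 xd]].
  apply: (recolor_inner_edge pf M1 M2 M3 n12 n23 n13m v12 v23 nx1 nx3 ex _ d345 xd).
  apply: (edge_color345 pf ex _ e23 n13 nx1 nx3).
  - by rewrite adj_sym.
  - by rewrite -(color_sym pf e12); apply: col; rewrite !inE eqxx ?orbT.
  - by apply: col; rewrite !inE eqxx ?orbT.
move/existsPn => all345; case: cond_fails; split=> [x y|x ex nx1 nx3].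
  rewrite !inE => /or3P [] /eqP-> /or3P [] /eqP-> //; rewrite ?eqxx // => _;
  by apply: count_common345; eauto; rewrite eq_sym.
by have := all345 x; rewrite ex nx1 nx3 !andTb negbK => /allP all_x c /all_x.
Qed.

Lemma recolor_12path5 f : proper5 e f ->
  forall u0 v1 v2 v3 v4 u5 : T,
     uniq [:: u0; v1; v2; v3; v4; u5] ->
     path e u0 [:: v1; v2; v3; v4; u5] ->
     (forall x y, (x, y) \in [:: (u0, v1); (v1, v2); (v2, v3); (v3, v4); (v4, u5)] ->
        (f x y == 1) || (f x y == 2)) ->
     exists g : coloring T,
       [/\ reach345 e f g, proper5 e g &
           [\/ missing_pair e g v1 v2, missing_pair e g v2 v3 | missing_pair e g v3 v4]].
Proof.
move=> pf u0 v1 v2 v3 v4 u5 + /and5P [e01 e12 e23 e34 /andP [e45 _]] col.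
rewrite /= !inE !negb_or => /andP [/and5P [_ n02 _ _ _]
  /and5P [/and4P [v12 n13 v14 _] /and3P [v23 n24 _] /andP [v34 n35] _ _]].
have [m1 M1] : exists m, missing345 f v1 m.
  by apply: (inner_missing345 pf e01 e12 n02); apply: col; rewrite !inE eqxx ?orbT.
have [m2 M2] : exists m, missing345 f v2 m.
  by apply: (inner_missing345 pf e12 e23 n13); apply: col; rewrite !inE eqxx ?orbT.
have [m3 M3] : exists m, missing345 f v3 m.
  by apply: (inner_missing345 pf e23 e34 n24); apply: col; rewrite !inE eqxx ?orbT.
have [m4 M4] : exists m, missing345 f v4 m.
  by apply: (inner_missing345 pf e34 e45 n35); apply: col; rewrite !inE eqxx ?orbT.
case: (m1 =P m2) => [m12|/eqP n12].
  by apply: recolorable_refl => //; apply: Or31; apply: missing345_pair M1 _; rewrite m12.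
case: (m2 =P m3) => [m23|/eqP n23].
  by apply: recolorable_refl => //; apply: Or32; apply: missing345_pair M2 _; rewrite m23.
case: (m3 =P m4) => [m34|/eqP n34].
  by apply: recolorable_refl => //; apply: Or33; apply: missing345_pair M3 _; rewrite m34.
case: (m1 =P m3) => [m13|/eqP n13m].
  rewrite -m13 in M3; have := recolor_aba pf M1 M2 M3 n12 v12 v23 n13.
  by apply: recolorable_mono => g [] ?; [apply: Or31 | apply: Or32].
case: (m2 =P m4) => [m24|/eqP n24m].
  rewrite -m24 in M4; have := recolor_aba pf M2 M3 M4 n23 v23 v34 n24.
  by apply: recolorable_mono => g [] ?; [apply: Or32 | apply: Or33].
have [n21 n42] : m2 != m1 /\ m4 != m2 by split; rewrite eq_sym.
have [h1 _ _] := M1; have [h2 _ _] := M2; have [h3 _ _] := M3; have [h4 _ _] := M4.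
have [m41|m43] := mem345_other h2 h1 h3 h4 n21 n13m n23 n42; last by rewrite m43 eqxx in n34.
rewrite m41 in M4; exact: recolor_abca pf M1 M2 M3 M4 n12 n23 n13m v12 v23 v34 n24 v14.
Qed.

End Regular.
End Graph.

Theorem lemma2p1 (T : finType) (e : rel T) (f : coloring T) :
  simple_graph e -> regular 4 e -> proper5 e f ->
  (* (a) *)
  (forall u0 v1 v2 v3 u4 : T,
     uniq [:: u0; v1; v2; v3; u4] ->
     path e u0 [:: v1; v2; v3; u4] ->
     (forall x y, (x, y) \in [:: (u0, v1); (v1, v2); (v2, v3); (v3, u4)] ->
        (f x y == 1) || (f x y == 2)) ->
     ~ ( (forall x y, x \in [:: v1; v2; v3] -> y \in [:: v1; v2; v3] -> x != y ->
            count (fun c => (c \in colors e f x) && (c \in colors e f y)) [:: 3; 4; 5] = 1)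
         /\ (forall x, e v2 x -> x != v1 -> x != v3 ->
               forall c, c \in [:: 3; 4; 5] -> c \in colors e f x) ) ->
     exists g : coloring T,
       [/\ reach345 e f g, proper5 e g &
           missing_pair e g v1 v2 \/ missing_pair e g v2 v3])
  /\
  (* (b) *)
  (forall u0 v1 v2 v3 v4 u5 : T,
     uniq [:: u0; v1; v2; v3; v4; u5] ->
     path e u0 [:: v1; v2; v3; v4; u5] ->
     (forall x y, (x, y) \in [:: (u0, v1); (v1, v2); (v2, v3); (v3, v4); (v4, u5)] ->
        (f x y == 1) || (f x y == 2)) ->
     exists g : coloring T,
       [/\ reach345 e f g, proper5 e g &
           [\/ missing_pair e g v1 v2, missing_pair e g v2 v3 | missing_pair e g v3 v4]]).
Proof.
move=> sg reg pf; split; [exact: recolor_12path4 | exact: recolor_12path5].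
Qed.
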